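(* Under the standing setting of the context, assume in addition $\beta\in(-2,0)$ and that $f$ is non-constant and does not depend on $\nabla\phi$. Let $\tau\in\mathfrak W_{<0}$. Then $\tau$ has at most one vertex $v$ with noise label $0$, and if such $v$ exists, it has exactly one outgoing edge $e$ whose derivative label $k$ satisfies $|k|_{\mathfrak s}=1$.
   Context: Standing setting. Integers $d\ge2$, $n\ge1$; $E$ a finite-dimensional real normed space; $\beta<0$. Scaling $\mathfrak s=(2,1,\dots,1)$, $|k|_{\mathfrak s}=2k_1+k_2+\dots+k_d$ for $k\in\mathbb N^d$; $\mathbb N^d_{<2}=\{k:|k|_{\mathfrak s}<2\}$. Jets: $\widehat{\mathcal J}=E^{\mathbb N^d}$, elements $\boldsymbol\phi=(\nabla^k\phi)_{k\in\mathbb N^d}$; $\mathcal J=E^{\mathbb N^d_{<2}}$, written $\boldsymbol\phi=(\phi,\nabla\phi)$; functions on $\mathcal J$ are viewed as functions on $\widehat{\mathcal J}$ depending on finitely many components. $P:\mathcal J\to E$ is a polynomial such that for some integer $p\ge2$ and linear $F:E^{\otimes p}\to E$, either $P(\boldsymbol\phi)=F(\phi^{\otimes p})$, or $q=(p-1)/2$ is an integer and $P(\boldsymbol\phi)=F(\phi^{\otimes p})+B(\nabla\phi\otimes\phi^{\otimes q})$ for a linear $B$; $\alpha=2/(p-1)$. $f=(f_1,\dots,f_n):\mathcal J\to L(\mathbb R^n,E)$ is smooth. Subcriticality: if $f$ is constant, $\beta>-\alpha-2$; if $f$ is non-constant but independent of $\nabla\phi$, $\beta>-2$; if $f$ depends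 on $\nabla\phi$, $\beta>-1$. Derivatives: for $\ell\in\mathbb N^d$, $D^\ell g$ is the derivative of $g$ in the $\ell$-th jet component; for a multiset $\mathbf k=\{k_1,\dots,k_r\}$ of elements of $\mathbb N^d$, $D^{\mathbf k}=D^{k_1}\cdots D^{k_r}$, $|\mathbf k|=r$, $|\mathbf k|_{\mathfrak s}=\sum|k_i|_{\mathfrak s}$. Trees: rooted trees with a polynomial label in $\mathbb N^d$ and a noise label in $\{0,\dots,n\}$ on each vertex and a derivative label in $\mathbb N^d$ on each edge, written uniquely (unordered product) as $\tau=X^k\Xi_j\prod_{i=1}^\ell\mathcal I^{k_i}[\tau_i]$: root with polynomial label $k$, noise label $j$, and $\ell$ edges with labels $k_i$ to the roots of subtrees $\tau_i$; $\Xi_0$ is also written $\mathbf 1$. Rules: $\mathfrak R_0=\{\mathbf k: D^{\mathbf k}P\ne0\}$; for $j\ge1$, $\mathfrak R_j=\emptyset$ if $f$ is constant, $\mathfrak R_j=\{\mathbf k:\text{all elements are }0\}$ if $f$ is non-constant and independent of $\nabla\phi$, $\mathfrak R_j=\{\mathbf k:|k|_{\mathfrak s}\le1\ \forall k\in\mathbf k\}$ if $f$ depends on $\nabla\phi$. $\tau$ is conforming if every $\tau_i$ is conforming and $\{k_1,\dots,k_\ell\}\in\mathfrak R_j$ (so every $X^k\Xi_j$ is conforming). Homogeneity: $|\Xi_j|_{\mathfrak s}=\beta$ ($j\ge1$), $|\mathbf 1|_{\mathfrak s}=0$, $|X^k\tau|_{\mathfrak s}=|k|_{\mathfrak s}+|\tau|_{\mathfrak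 s}$, $|\tau\sigma|_{\mathfrak s}=|\tau|_{\mathfrak s}+|\sigma|_{\mathfrak s}$, $|\mathcal I^k[\tau]|_{\mathfrak s}=|\tau|_{\mathfrak s}+2-|k|_{\mathfrak s}$. A leaf is a non-root vertex incident to exactly one edge; it is a polynomial leaf if its noise label is $0$. $\mathfrak W$ is the set of conforming trees with no polynomial leaves, and $\mathfrak W_{<0}=\{\tau\in\mathfrak W:-2<|\tau|_{\mathfrak s}<0\}$. An edge $\{v,w\}$ is outgoing from $v$ if $v$ lies on the path from $w$ to the root. *)

From HB Require Import structures.
From mathcomp Require Import all_boot all_order all_algebra.
From mathcomp Require Import all_classical all_reals.
From mathcomp Require Import topology normedtype derive.
From Stdlib Require List.

Set Implicit Arguments.
Unset Strict Implicit.
Unset Printing Implicit Defensive.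

Import Order.TTheory GRing.Theory Num.Theory.
Import numFieldNormedType.Exports.
Local Open Scope ring_scope.

(* Coordinate 0 (of 'I_d) is the time direction (weight 2).           *)
Definition mi (d : nat) := {ffun 'I_d -> nat}.

Definition scal (d : nat) (k : mi d) : nat :=
  (\sum_(i < d) (if (i : nat) == 0%N then 2 * k i else k i))%N.

Definition mi0 (d : nat) : mi d := [ffun => 0%N].

Definition ei (d : nat) (i : 'I_d) : mi d := [ffun j => nat_of_bool (j == i)].

(* Jets.  A full jet (element of \hat J = E^{N^d}) is a function        *)
(* from multi-indices to E.  Functions on J are functions on \hat J    *)
(* depending only on the components k with |k|_s < 2.                  *)
Definition jet (d : nat) (E : Type) := mi d -> E.

Definition upd (T : eqType) (E : Type) (x : T -> E) (k : T) (e : E) : T -> E :=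
  fun l => if l == k then e else x l.

Definition dirD (R : realType) (E : normedModType R) (d : nat)
  (k : mi d) (h : E) (g : jet d E -> E) : jet d E -> E :=
  fun x => derive1 (fun t : R => g (upd x k (x k + t *: h))) 0.

Fixpoint Dmulti (R : realType) (E : normedModType R) (d : nat)
  (ks : seq (mi d)) (hs : seq E) (g : jet d E -> E) : jet d E -> E :=
  match ks, hs with
  | k :: ks', h :: hs' => dirD k h (Dmulti ks' hs' g)
  | _, _ => g
  end.

Definition Dnonzero (R : realType) (E : normedModType R) (d : nat)
  (ks : seq (mi d)) (g : jet d E -> E) : Prop :=
  exists (x : jet d E) (hs : seq E), size hs = size ks /\ Dmulti ks hs g x <> 0.

(* multilinear maps E^m -> E  (= linear maps E^{(x) m} -> E) *)
Definition multilinear (R : realType) (E : normedModType R) (m : nat)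
  (M : ('I_m -> E) -> E) : Prop :=
  forall (i : 'I_m) (v : 'I_m -> E) (a : R) (x y : E),
    M (upd v i (a *: x + y)) = a *: M (upd v i x) + M (upd v i y).

(* The linear map B on grad phi (x) phi^{(x) q}, grad phi in E^{d-1}, is encoded
   by the family (B i)_{i spatial}, each a (q+1)-multilinear map, via
   B(grad phi (x) phi^q) = sum_{i=1}^{d-1} B_i(d_i phi, phi, ..., phi).
   (B at the time index 0 is unused.) *)
Definition Ppoly (R : realType) (E : normedModType R) (d p q : nat)
  (F : ('I_p -> E) -> E) (withB : bool) (B : 'I_d -> ('I_q.+1 -> E) -> E)
  (x : jet d E) : E :=
  F (fun _ => x (mi0 d)) +
  (if withB then
     \sum_(i < d | (i : nat) != 0%N)
        B i (fun j : 'I_q.+1 => if (j : nat) == 0%N then x (ei i) else x (mi0 d))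
   else 0).

(* Trees: root with polynomial label k, noise label j, and children    *)
(* (edge derivative label, subtree).  The order of children is         *)
(* irrelevant for every notion below (unordered product).              *)
Inductive tree (d : nat) : Type :=
  Node : mi d -> nat -> seq (mi d * tree d) -> tree d.

Definition polylab d (t : tree d) : mi d := let: Node k _ _ := t in k.
Definition noise d (t : tree d) : nat := let: Node _ j _ := t in j.
Definition children d (t : tree d) : seq (mi d * tree d) :=
  let: Node _ _ cs := t in cs.

Fixpoint verts d (t : tree d) : seq (tree d) :=
  let: Node _ _ cs := t in
  t :: (fix vs (cs : seq (mi d * tree d)) : seq (tree d) :=
          match cs with
          | [::] => [::]
          | (_, c) :: cs' => verts c ++ vs cs'
          end) cs.

Fixpoint hom (R : realType) (beta : R) d (t : tree d) : R :=
  let: Node k j cs := t in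
  (scal k)%:R + (if j == 0%N then 0 else beta) +
  (fix hs (cs : seq (mi d * tree d)) : R :=
     match cs with
     | [::] => 0
     | (e, c) :: cs' => (hom beta c + 2 - (scal e)%:R) + hs cs'
     end) cs.

Definition f_const (R : realType) (E : normedModType R) d n
  (f : 'I_n -> jet d E -> E) : Prop :=
  forall j x y, f j x = f j y.

Definition f_indep_grad (R : realType) (E : normedModType R) d n
  (f : 'I_n -> jet d E -> E) : Prop :=
  forall j (x y : jet d E), x (mi0 d) = y (mi0 d) -> f j x = f j y.

Definition rule (R : realType) (E : normedModType R) d n
  (P : jet d E -> E) (f : 'I_n -> jet d E -> E) (j : nat) (ks : seq (mi d)) : Prop :=
  if j == 0%N then Dnonzero ks P
  else [/\ ~ f_const f,
           f_indep_grad f -> all (fun k => k == mi0 d) ks &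
           ~ f_indep_grad f -> all (fun k => scal k <= 1)%N ks].

Definition conforming d (Rule : nat -> seq (mi d) -> Prop) (n : nat) (t : tree d) : Prop :=
  forall v, List.In v (verts t) ->
    (noise v <= n)%N /\ Rule (noise v) (map fst (children v)).

Definition no_poly_leaves d (t : tree d) : Prop :=
  forall c, List.In c (map snd (children t)) ->
  forall v, List.In v (verts c) -> children v = [::] -> noise v <> 0%N.

Definition in_W_neg (R : realType) (beta : R) d (Rule : nat -> seq (mi d) -> Prop)
  (n : nat) (t : tree d) : Prop :=
  [/\ conforming Rule n t, no_poly_leaves t & -2 < hom beta t < 0].

From Pilot Require Import Defs.
From HB Require Import structures.
From mathcomp Require Import all_boot all_order all_algebra.
From mathcomp Require Import all_classical all_reals.
From mathcomp Require Import topology normedtype derive.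
From Stdlib Require List.
From mathcomp Require Import zify lra.
Import Order.TTheory GRing.Theory Num.Theory.
Import numFieldNormedType.Exports.
Local Open Scope ring_scope.

Set Implicit Arguments.
Unset Strict Implicit.
Unset Printing Implicit Defensive.

(* The polynomial P is a sum of multilinear monomials in the jet components
   phi and d_i phi, of parabolic weight at most 1.  Differentiating in the
   k-th jet component lowers the weight of each monomial by |k|_s (or kills
   it), so D^ks P <> 0 forces sum |k|_s <= 1; and since f does not depend on
   grad phi, noise vertices only have 0-labelled outgoing edges.
   Distributing the homogeneity over vertices,
     |tau|_s + 2 = sum_v (|k_v|_s + [beta if v carries noise] + 2 - sum_{e out of v} |k_e|_s),
   every summand is >= 0 (as beta > -2) and the summand of a vertex with noise
   label 0 is >= 2 - sum_e |k_e|_s >= 1.  As |tau|_s + 2 < 2, there is at most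
   one such vertex, and its outgoing labels have weight sum exactly 1. *)

Section MultilinearDerivative.
Variables (R : realType) (E : normedModType R).
Local Open Scope classical_set_scope.

Lemma is_derive0_scale_id (psi : R -> E) : derivable psi 0 1 ->
  is_derive (0 : R) (1 : R) (fun t => t *: psi t) (psi 0).
Proof.
move=> dpsi.
have cpsi : psi @ (0 : R)^' --> psi 0.
  apply: cvg_within_filter.
  by apply: differentiable_continuous; apply/derivable1_diffP.
have quotient_cvg : (fun h : R => h^-1 *: (((fun t => t *: psi t) \o shift 0)
    (h *: 1) - (fun t => t *: psi t) 0)) @ (0 : R)^' --> psi 0.
  apply: cvg_trans cpsi; apply: near_eq_cvg; near=> h.
  have hn0 : h != 0 by near: h; exact: nbhs_dnbhs_neq.
  by rewrite /= scale0r subr0 addr0 [h *: 1]mulr1 scalerA mulVf ?scale1r.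
apply: DeriveDef; first by apply/cvg_ex; exists (psi 0).
exact: cvg_lim quotient_cvg.
Unshelve. all: by end_near.
Qed.

Lemma multilinear_upd0 r (M : ('I_r -> E) -> E) v i :
  multilinear M -> M (upd v i 0) = 0.
Proof.
move=> /(_ i v 1 0 0); rewrite scale1r addr0 scale1r.
by move/(congr1 (fun z => z - M (upd v i 0))); rewrite /= subrr addrK.
Qed.

(* Induction on the number [n] of slots that move along the line. *)
Lemma is_derive_multilinear_prefix r (M : ('I_r -> E) -> E) (b : 'I_r -> E) n a :
  multilinear M ->
  is_derive (0 : R) (1 : R)
    (fun t : R => M (fun j => a j + t *: (if (j < n)%N then b j else 0)))
    (\sum_(j < r | (j < n)%N) M (upd a j (b j))).
Proof.
move=> HM; elim: n a => [|n IH] a.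
  rewrite big_pred0 //; under eq_fun do under eq_fun do rewrite scaler0 addr0.
  exact: is_derive_cst.
have [nr|rn] := ltnP n r; last first.
  have lt_n (j : 'I_r) : (j < n.+1)%N = (j < n)%N :> bool.
    by rewrite !(leq_trans (ltn_ord j)) // ltnW.
  under eq_fun do under eq_fun do rewrite lt_n.
  by under eq_bigl do rewrite lt_n; exact: IH.
pose j0 := Ordinal nr; pose a' := upd a j0 (b j0).
have moved (j : 'I_r) : (j < n.+1)%N = (j == j0) || (j < n)%N.
  by rewrite ltnS leq_eqVlt -(inj_eq val_inj).
have still (j : 'I_r) : j = j0 -> (j < n)%N = false by move=> ->; rewrite ltnn.
have split_line t : M (fun j => a j + t *: (if (j < n.+1)%N then b j else 0)) =
    M (fun j => a j + t *: (if (j < n)%N then b j else 0)) +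
    t *: M (fun j => a' j + t *: (if (j < n)%N then b j else 0)).
  set line := (fun j => a j + t *: (if (j < n)%N then b j else 0)).
  have -> : (fun j => a j + t *: (if (j < n.+1)%N then b j else 0)) =
      upd line j0 (t *: b j0 + a j0).
    apply/funext => j; rewrite /upd /line moved; case: eqP => [->|_ //].
    by rewrite still // addrC.
  rewrite HM addrC; congr (_ + _); [congr M|congr (_ *: M _)];
    apply/funext => j; rewrite /line /a' /upd;
    by case: eqP => [->|//]; rewrite still //= scaler0 addr0.
have -> : \sum_(j < r | (j < n.+1)%N) M (upd a j (b j)) =
    \sum_(j < r | (j < n)%N) M (upd a j (b j)) +
    M (fun j => a' j + 0 *: (if (j < n)%N then b j else 0)).
  rewrite (bigD1 j0) ?moved ?eqxx //= addrC; congr (_ + _).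
    by apply: eq_bigl => j; rewrite moved; case: eqP => [->|_]; rewrite ?andbT //=; lia.
  by congr (M _); apply/funext => j; rewrite scale0r addr0.
under eq_fun do rewrite split_line.
apply: is_deriveD; apply: is_derive0_scale_id.
by have [] := IH a'.
Qed.

Lemma is_derive_multilinear r (M : ('I_r -> E) -> E) (a b : 'I_r -> E) :
  multilinear M ->
  is_derive (0 : R) (1 : R) (fun t : R => M (fun j => a j + t *: b j))
    (\sum_(j < r) M (upd a j (b j))).
Proof.
move=> /(is_derive_multilinear_prefix b r a).
by under eq_fun do under eq_fun do rewrite ltn_ord; under eq_bigl do rewrite ltn_ord.
Qed.

End MultilinearDerivative.

Lemma In_map_inv (A B : Type) (f : A -> B) s y :
  List.In y (map f s) -> exists2 x, List.In x s & y = f x.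
Proof. by move/List.in_map_iff => [x [<- Hx]]; exists x. Qed.

Lemma In_filter_inv (A : Type) (P : pred A) s x :
  List.In x (seq.filter P s) -> List.In x s /\ P x.
Proof.
elim: s => //= a s IH; case: ifP => Pa /=; last by move/IH => [Hx Px]; split; [right|].
by move=> [<-|/IH [Hx Px]]; split; [left| |right|].
Qed.

Lemma In_flatten_inv (A : Type) (ss : seq (seq A)) y :
  List.In y (flatten ss) -> exists2 s, List.In s ss & List.In y s.
Proof.
elim: ss => //= s ss IH /(List.in_app_or s (flatten ss) y) [Hy|/IH [s' Hs' Hy]].
  by exists s; [left|].
by exists s'; [right|].
Qed.

Lemma scal_mi0 (d : nat) : scal (mi0 d) = 0%N.
Proof. by rewrite /scal big1 // => i _; rewrite ffunE; case: ifP. Qed.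

Lemma scal_ei (d : nat) (i : 'I_d) : (i : nat) != 0%N -> scal (ei i) = 1%N.
Proof.
move=> i0; rewrite /scal (bigD1 i) //= ffunE eqxx (negbTE i0) big1 ?addn0 //.
by move=> j /negbTE ji; rewrite ffunE ji; case: ifP.
Qed.

Section JetPolynomials.
Variables (R : realType) (E : normedModType R) (d : nat).

(* A slot of a monomial is either the jet component [inl k], of weight
   |k|_s, or a frozen direction [inr h] left by a previous derivative. *)
Record monomial := Monomial {
  arity : nat;
  mmap : ('I_arity -> E) -> E;
  slot : 'I_arity -> (mi d + E)%type }.
Arguments mmap : clear implicits.
Arguments slot : clear implicits.

Definition slot_val (x : jet d E) (s : (mi d + E)%type) : E :=
  match s with inl k => x k | inr h => h end.

Definition slot_weight (s : (mi d + E)%type) : nat :=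
  match s with inl k => scal k | inr _ => 0%N end.

Definition meval (m : monomial) (x : jet d E) : E :=
  mmap m (fun j => slot_val x (slot m j)).

Definition mweight (m : monomial) : nat := (\sum_(j < arity m) slot_weight (slot m j))%N.

Definition mderiv (k : mi d) (h : E) (m : monomial) : seq monomial :=
  [seq Monomial (mmap m) (fun i => if i == j then inr h else slot m i) |
     j <- enum 'I_(arity m) & slot m j == inl k].

Definition jet_poly (w : nat) (g : jet d E -> E) : Prop :=
  exists L : seq monomial,
    (forall m, List.In m L -> multilinear (mmap m) /\ (mweight m <= w)%N) /\
    forall x, g x = \sum_(m <- L) meval m x.

Lemma meval_is_derive k h m x : multilinear (mmap m) ->
  is_derive (0 : R) (1 : R) (fun t : R => meval m (upd x k (x k + t *: h)))
    (\sum_(m' <- mderiv k h m) meval m' x).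
Proof.
move=> HM.
pose b j := if slot m j == inl k then h else 0.
have -> : (fun t : R => meval m (upd x k (x k + t *: h))) =
    (fun t => mmap m (fun j => slot_val x (slot m j) + t *: b j)).
  apply/funext => t; congr (mmap m); apply/funext => j; rewrite /b.
  case: (slot m j) => [k'|v] /=; last by rewrite scaler0 addr0.
  by rewrite /upd (inj_eq (@inl_inj _ _)); case: eqP => [->|]; rewrite ?scaler0 ?addr0.
apply: is_derive_eq; first exact: (is_derive_multilinear _ b HM).
rewrite big_map big_filter big_enum_cond /= [RHS]big_mkcond.
apply: eq_bigr => j _; rewrite /b; case: eqP => _; last exact: multilinear_upd0.
by congr (mmap m); apply/funext => i; rewrite /upd; case: eqP.
Qed.

Lemma In_mderiv k h m m' : List.In m' (mderiv k h m) ->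
  exists2 j, slot m j = inl k &
    m' = Monomial (mmap m) (fun i => if i == j then inr h else slot m i).
Proof.
move=> Hm; have [j Hj ->] := In_map_inv Hm.
by have [_ /eqP Hk] := In_filter_inv Hj; exists j.
Qed.

Lemma multilinear_mderiv k h m m' : List.In m' (mderiv k h m) ->
  multilinear (mmap m) -> multilinear (mmap m').
Proof. by move/In_mderiv => [j _ ->]. Qed.

Lemma mweight_mderiv k h m m' : List.In m' (mderiv k h m) ->
  (mweight m' + scal k = mweight m)%N.
Proof.
move/In_mderiv => [j Hj ->]; rewrite /mweight /= (bigD1 j) //= [in RHS](bigD1 j) //=.
rewrite eqxx Hj add0n addnC; congr (_ + _)%N.
by apply: eq_bigr => i /negbTE ->.
Qed.

Lemma mderiv_nil k h m : (mweight m < scal k)%N -> mderiv k h m = [::].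
Proof.
case E_m: (mderiv k h m) => [//|m' s] lt_m; exfalso.
have Hm' : List.In m' (mderiv k h m) by rewrite E_m; left.
by have := mweight_mderiv Hm'; lia.
Qed.

Lemma dirD_sum_meval k h (L : seq monomial) x :
  (forall m, List.In m L -> multilinear (mmap m)) ->
  dirD k h (fun y => \sum_(m <- L) meval m y) x =
    \sum_(m <- L) \sum_(m' <- mderiv k h m) meval m' x.
Proof.
move=> HL; rewrite /dirD derive1E; apply: derive_val.
elim: L HL => [|m L IH] HL.
  rewrite big_nil; under eq_fun do rewrite big_nil; exact: is_derive_cst.
rewrite big_cons; under eq_fun do rewrite big_cons.
apply: is_deriveD; first by apply: meval_is_derive; apply: HL; left.
by apply: IH => m' Hm'; apply: HL; right.
Qed.

Lemma jet_poly_dirD w g k h :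
  jet_poly w g -> jet_poly (w - scal k) (dirD k h g).
Proof.
move=> [L [HL /funext ->]]; exists (flatten (map (mderiv k h) L)); split.
  move=> m' Hm'L; have [s Hs Hm'] := In_flatten_inv Hm'L.
  have [m Hm Es] := In_map_inv Hs; subst s.
  have [HM Hw] := HL m Hm; split; first exact: multilinear_mderiv Hm' HM.
  by have := mweight_mderiv Hm'; lia.
move=> x; rewrite dirD_sum_meval ?big_flatten ?big_map // => m Hm.
by have [] := HL m Hm.
Qed.

Lemma dirD_jet_poly_eq0 w g k h x :
  jet_poly w g -> (w < scal k)%N -> dirD k h g x = 0.
Proof.
move=> [L [HL /funext ->]] lt_wk; rewrite dirD_sum_meval => [|m /HL []//].
elim: L HL => [|m L IH] HL; first by rewrite big_nil.
have [_ Hw] := HL m (or_introl erefl).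
rewrite big_cons mderiv_nil ?(leq_ltn_trans Hw) // big_nil add0r.
by apply: IH => m' Hm'; apply: HL; right.
Qed.

Lemma jet_poly_Dmulti w g ks hs : jet_poly w g -> size hs = size ks ->
  jet_poly (w - sumn (map (@scal d) ks)) (Dmulti ks hs g).
Proof.
move=> Hg; elim: ks hs => [|k ks IH] [|h hs] //= => [_|[/IH Hks]].
  by rewrite subn0.
by rewrite addnC subnDA; apply: jet_poly_dirD.
Qed.

Lemma Dmulti_jet_poly_eq0 w g ks hs x : jet_poly w g -> size hs = size ks ->
  (w < sumn (map (@scal d) ks))%N -> Dmulti ks hs g x = 0.
Proof.
move=> Hg; elim: ks hs x => [|k ks IH] [|h hs] x //= [Hs] lt_w.
change (dirD k h (Dmulti ks hs g) x = 0).
have [lt_wks|le_ksw] := ltnP w (sumn (map (@scal d) ks)).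
  rewrite /dirD (_ : (fun t : R => _) = cst 0) ?derive1_cst //.
  by apply/funext => t; apply: IH.
by apply: (dirD_jet_poly_eq0 _ _ (jet_poly_Dmulti Hg Hs)); lia.
Qed.

Lemma jet_poly_Ppoly p q (F : ('I_p -> E) -> E) (withB : bool)
    (B : 'I_d -> ('I_q.+1 -> E) -> E) :
  multilinear F -> (forall i, multilinear (B i)) -> jet_poly 1 (Ppoly F withB B).
Proof.
move=> HF HB.
pose mF := Monomial F (fun _ => inl (mi0 d)).
pose mB i := Monomial (B i)
  (fun j : 'I_q.+1 => if (j : nat) == 0%N then inl (ei i) else inl (mi0 d)).
exists (mF :: (if withB then [seq mB i | i : 'I_d <- enum 'I_d & (i : nat) != 0%N] else [::])).
split.
  move=> m [<-|]; first by split => //; rewrite /mweight big1 // => j _ /=; rewrite scal_mi0.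
  case: withB => // Hm; have [i Hi ->] := In_map_inv Hm.
  have [_ i0] := In_filter_inv Hi; split; first exact: HB.
  by rewrite /mweight big_ord_recl /= scal_ei // big1 // => j _; rewrite /= scal_mi0.
move=> x; rewrite big_cons /Ppoly; congr (_ + _).
case: withB; last by rewrite big_nil.
rewrite big_map big_filter big_enum_cond; apply: eq_bigr => i _.
by rewrite /meval /=; congr (B i); apply/funext => j; case: ifP.
Qed.

Lemma Dnonzero_Ppoly p q (F : ('I_p -> E) -> E) (withB : bool)
    (B : 'I_d -> ('I_q.+1 -> E) -> E) ks :
  multilinear F -> (forall i, multilinear (B i)) ->
  Dnonzero ks (Ppoly F withB B) -> (sumn (map (@scal d) ks) <= 1)%N.
Proof.
move=> HF HB [x [hs [Hs]]]; rewrite leqNgt; apply: contra_notN.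
exact: Dmulti_jet_poly_eq0 (jet_poly_Ppoly withB HF HB) Hs.
Qed.

End JetPolynomials.

Section WeightedCounting.
Variables (R : numDomainType) (T : Type).

Lemma sum_In_ge0 (w : T -> R) s :
  (forall v, List.In v s -> 0 <= w v) -> 0 <= \sum_(v <- s) w v.
Proof.
elim: s => [|u s IH] w0; first by rewrite big_nil.
rewrite big_cons addr_ge0 //; first by apply: w0; left.
by apply: IH => v Hv; apply: w0; right.
Qed.

Lemma In_le_sum (w : T -> R) s v :
  (forall u, List.In u s -> 0 <= w u) -> List.In v s -> w v <= \sum_(u <- s) w u.
Proof.
elim: s => [|u s IH] w0 //= Hv; rewrite big_cons.
have w0s u' : List.In u' s -> 0 <= w u' by move=> Hu'; apply: w0; right.
case: Hv => [->|Hv]; first by rewrite lerDl sum_In_ge0.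
by rewrite -[w v]add0r lerD ?IH //; apply: w0; left.
Qed.

Lemma count_le_sum (P : pred T) (w : T -> R) s :
  (forall v, List.In v s -> 0 <= w v) -> (forall v, List.In v s -> P v -> 1 <= w v) ->
  (count P s)%:R <= \sum_(v <- s) w v.
Proof.
elim: s => [|v s IH] w0 w1 /=; first by rewrite big_nil.
rewrite big_cons natrD lerD //.
  by case Pv: (P v); [apply: w1 => //; left|apply: w0; left].
by apply: IH => u Hu; [apply: w0|apply: w1]; right.
Qed.

End WeightedCounting.

Lemma sumn_eq1_count (s : seq nat) : sumn s = 1%N -> count (fun x => x == 1%N) s = 1%N.
Proof.
elim: s => //= -[|[|a]] s IH /=; [by move/IH| |by rewrite !addSn].
case=> s0; suff -> : count (fun x => x == 1%N) s = 0%N by [].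
by elim: s s0 {IH} => //= -[|b] s IHs //= /IHs ->.
Qed.

Section TreeHomogeneity.
Variables (R : realType) (beta : R) (d : nat).

Lemma tree_ind_In (P : tree d -> Prop) :
  (forall k j cs, (forall c, List.In c (map snd cs) -> P c) -> P (Node k j cs)) ->
  forall t, P t.
Proof.
move=> IHnode; fix IH 1 => -[k j cs]; apply: IHnode.
move: cs; fix IHcs 1 => -[|[e c] cs] c' /= Hc'; first by case: Hc'.
case: Hc' => [<-|Hc']; [exact: IH|exact: IHcs Hc'].
Qed.

Lemma verts_node (k : mi d) (j : nat) (cs : seq (mi d * tree d)) :
  verts (Node k j cs) = Node k j cs :: flatten (map (fun c => verts c.2) cs).
Proof. by rewrite /=; congr (_ :: _); elim: cs => //= [[e c] cs] ->. Qed.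

Lemma hom_node (k : mi d) (j : nat) (cs : seq (mi d * tree d)) :
  Defs.hom beta (Node k j cs) = (scal k)%:R + (if j == 0%N then 0 else beta) +
    \sum_(c <- cs) (Defs.hom beta c.2 + 2 - (scal c.1)%:R).
Proof.
rewrite /=; congr (_ + _); elim: cs => [|[e c] cs IH] /=; first by rewrite big_nil.
by rewrite big_cons IH.
Qed.

Definition out_weight (v : tree d) : nat := sumn (map (@scal d) (map fst (children v))).

Definition vweight (v : tree d) : R :=
  (scal (polylab v))%:R + (if noise v == 0%N then 0 else beta) + 2 - (out_weight v)%:R.

Lemma hom_add2_sum_vweight t : Defs.hom beta t + 2 = \sum_(v <- verts t) vweight v.
Proof.
elim/tree_ind_In: t => k j cs IH.
rewrite verts_node big_cons big_flatten big_map hom_node /vweight /out_weight /=.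
suff -> : \sum_(c <- cs) \sum_(v <- verts c.2) vweight v =
    \sum_(c <- cs) (Defs.hom beta c.2 + 2 - (scal c.1)%:R) + (sumn (map (@scal d) (map fst cs)))%:R.
  by lra.
elim: cs IH => [|[e c] cs IHcs] IH; first by rewrite !big_nil addr0.
rewrite !big_cons /= IHcs -?IH ?natrD; [lra|left|] => //.
by move=> c' Hc'; apply: IH; right.
Qed.

Lemma vweight_noise0_ge v : noise v = 0%N -> 2 - (out_weight v)%:R <= vweight v.
Proof. by move=> /eqP v0; rewrite /vweight v0; have := ler0n R (scal (polylab v)); lra. Qed.

Lemma vweight_noise_ge0 v : -2 < beta -> out_weight v = 0%N -> 0 <= vweight v.
Proof.
move=> beta_gt out0; rewrite /vweight out0 subr0.
by have := ler0n R (scal (polylab v)); case: ifP => _; lra.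
Qed.

End TreeHomogeneity.

Lemma rule_Ppoly_sum_scal (R : realType) (E : normedModType R) (d n p q : nat)
    (F : ('I_p -> E) -> E) (withB : bool) (B : 'I_d -> ('I_q.+1 -> E) -> E)
    (f : 'I_n -> jet d E -> E) j ks :
  multilinear F -> (forall i, multilinear (B i)) -> f_indep_grad f ->
  rule (Ppoly F withB B) f j ks ->
  (j = 0%N -> (sumn (map (@scal d) ks) <= 1)%N) /\
  (j != 0%N -> sumn (map (@scal d) ks) = 0%N).
Proof.
move=> HF HB Hind; rewrite /rule; case: eqP => [-> HD|/eqP jn0 [_ H0 _]].
  by split=> [_|//]; exact: Dnonzero_Ppoly HD.
split=> [j0|_]; first by rewrite j0 eqxx in jn0.
by move: (H0 Hind); elim: ks {H0} => //= k ks IH /andP[/eqP -> /IH ->]; rewrite scal_mi0.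
Qed.

Theorem lemma6 (R : realType) (d n : nat) (E : normedModType R)
  (p q : nat) (F : ('I_p -> E) -> E) (withB : bool)
  (B : 'I_d -> ('I_q.+1 -> E) -> E)
  (f : 'I_n -> jet d E -> E) (beta : R) (tau : tree d) :
  (2 <= d)%N -> (1 <= n)%N ->
  (* E is finite-dimensional *)
  (exists (m : nat) (b : 'I_m -> E),
     forall x : E, exists c : 'I_m -> R, x = \sum_(i < m) c i *: b i) ->
  (2 <= p)%N -> multilinear F ->
  (withB -> p = q.*2.+1) -> (forall i, multilinear (B i)) ->
  (* f is a function on J: depends only on the components |k|_s < 2 *)
  (forall j (x y : jet d E), (forall k, (scal k < 2)%N -> x k = y k) -> f j x = f j y) ->
  ~ f_const f -> f_indep_grad f ->
  -2 < beta < 0 ->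
  in_W_neg beta (rule (Ppoly F withB B) f) n tau ->
  (count (fun v => noise v == 0%N) (verts tau) <= 1)%N /\
  (forall v, List.In v (verts tau) -> noise v = 0%N ->
     count (fun e => scal e.1 == 1%N) (children v) = 1%N).
Proof.
move=> _ _ _ _ HF _ HB _ _ Hind /andP[beta_gt _] [Hconf _ /andP[_ hom_lt0]].
have out_v v : List.In v (verts tau) ->
    (noise v = 0%N -> (out_weight v <= 1)%N) /\ (noise v != 0%N -> out_weight v = 0%N).
  by move=> /Hconf [_]; exact: rule_Ppoly_sum_scal.
have w_ge1 v : List.In v (verts tau) -> noise v = 0%N -> 1 <= vweight beta v.
  move=> Hv v0; have := vweight_noise0_ge beta v0.
  by have := (out_v v Hv).1 v0; rewrite -(lern1 R); lra.
have w_ge0 v : List.In v (verts tau) -> 0 <= vweight beta v.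
  move=> Hv; have [v0|vn0] := eqVneq (noise v) 0%N.
    by apply: le_trans (w_ge1 v Hv v0).
  exact: vweight_noise_ge0 ((out_v v Hv).2 vn0).
have sum_lt2 : \sum_(v <- verts tau) vweight beta v < 2.
  by rewrite -hom_add2_sum_vweight; lra.
split.
  have := count_le_sum (P := fun v => noise v == 0%N) w_ge0 (fun v Hv => w_ge1 v Hv \o eqP).
  by move/le_lt_trans/(_ sum_lt2); rewrite -[2]/(2%:R) ltr_nat ltnS.
move=> v Hv v0.
have := le_lt_trans (In_le_sum w_ge0 Hv) sum_lt2; have := vweight_noise0_ge beta v0.
have := (out_v v Hv).1 v0; rewrite -(lern1 R) => le1 ge lt2.
have /eqP out1 : out_weight v == 1%N by rewrite eqn_leq -(lern1 R) le1 -(ltr0n R); lra.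
by have := sumn_eq1_count out1; rewrite !count_map.
Qed.
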